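(* Let $X$ be a Banach space over $\mathbb K\in\{\mathbb R,\mathbb C\}$, $(S,\Sigma,\mu)$ a measure space, and $f,g:S\to X$ strongly measurable functions such that for each $x^*\in X^*$ one has $|\langle g,x^*\rangle|\le|\langle f,x^*\rangle|$ $\mu$-a.e. Then there exists a $\Sigma$-measurable function $a:S\to\mathbb K$ with $\|a\|_\infty\le1$ and $g=af$ $\mu$-a.e. *)

From mathcomp Require Import all_boot all_order all_algebra.
From mathcomp Require Import all_classical all_reals all_analysis.
From mathcomp Require Import complex.
Set Implicit Arguments. Unset Strict Implicit. Unset Printing Implicit Defensive.
Import Order.TTheory GRing.Theory Num.Theory.
Import numFieldNormedType.Exports.
Local Open Scope classical_set_scope.
Local Open Scope ring_scope.

Inductive scalar_field := RealScalars | ComplexScalars.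

Definition Kof (R : realType) (c : scalar_field) : numFieldType :=
  match c with
  | RealScalars => (R : numFieldType)
  | ComplexScalars => (R[i] : numFieldType)
  end.

Definition borel_measurable d (S : measurableType d) (T : topologicalType)
  (a : S -> T) : Prop :=
  forall U : set T, open U -> measurable (a @^-1` U).

Definition simple_fun d (S : measurableType d) (X : Type) (phi : S -> X) : Prop :=
  finite_set (range phi) /\ forall x : X, measurable (phi @^-1` [set x]).

Definition strongly_measurable d (S : measurableType d) (K : numFieldType)
  (X : normedModType K) (f : S -> X) : Prop :=
  exists phi : nat -> S -> X,
    (forall n, simple_fun (phi n)) /\
    (forall s, (fun n => phi n s) @ \oo --> f s).

(* For functionals x* ranging over a suitable countable family, the hypothesis
   holds simultaneously outside a single null set.  The family is built with
   the Hahn-Banach theorem from the countably many values of the simple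
   functions approximating f and g: for all such values c1, c2 and every n it
   contains a functional of norm at most 1 vanishing at c1 and of size at least
   1/(n+1) at c2, as soon as c2 is that far from the line K c1.  Off the null
   set, domination by this family forces g(s) onto the line K f(s): otherwise
   g(s) has positive distance to it, approximating values c1, c2 of f(s), g(s)
   keep half of that distance, and the corresponding functional is small at
   f(s) but large at g(s).  The factor a(s) = x*(g s) / x*(f s), for the first
   member of the family not vanishing at f(s), has modulus at most 1 and is
   measurable as a pointwise limit of ratios of simple functions.  Hahn-Banach
   is proved over R with Zorn's lemma and transferred to complex spaces through
   the real part of the norm. *)

From HB Require Import structures.
From mathcomp Require Import all_boot all_order all_algebra.
From mathcomp Require Import all_classical all_reals all_analysis.
From mathcomp Require Import complex.
From mathcomp Require Import ring lra.
Set Implicit Arguments. Unset Strict Implicit. Unset Printing Implicit Defensive.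
Import Order.TTheory GRing.Theory Num.Theory.
Import numFieldNormedType.Exports.
Local Open Scope classical_set_scope.
Local Open Scope ring_scope.

Section HahnBanach.
Variables (R : realType) (V : lmodType R) (p : V -> R).
Hypothesis pD : forall x y, p (x + y) <= p x + p y.
Hypothesis pZ : forall (t : R) x, 0 <= t -> p (t *: x) = t * p x.

Definition dominated_graph (G : set (V * R)) :=
  [/\ G (0, 0),
      (forall x a y b, G (x, a) -> G (y, b) -> G (x + y, a + b)),
      (forall t x a, G (x, a) -> G (t *: x, t * a)),
      (forall x a b, G (x, a) -> G (x, b) -> a = b) &
      (forall x a, G (x, a) -> a <= p x)].

Section OneStepExtension.
Variables (G : set (V * R)) (x0 : V).
Hypothesis domG : dominated_graph G.
Hypothesis x0_notin : forall a, ~ G (x0, a).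

Let lower := [set z | exists y b, G (y, b) /\ z = b - p (y - x0)].

Let lower_le x a y b : G (x, a) -> G (y, b) -> b - p (y - x0) <= p (x + x0) - a.
Proof.
case: domG => _ GD _ _ Gp Gxa Gyb.
have := Gp _ _ (GD _ _ _ _ Gxa Gyb).
have := pD (x + x0) (y - x0); rewrite addrACA subrr addr0; lra.
Qed.

Let has_sup_lower : has_sup lower.
Proof.
case: domG => G00 _ _ _ _; split; first by exists (0 - p (0 - x0)), 0, 0.
exists (p (0 + x0) - 0) => _ [y [b [Gyb ->]]]; exact: lower_le Gyb.
Qed.

(* The value [c] assigned to [x0] must satisfy
   [b - p (y - x0) <= c <= p (x + x0) - a] on the whole graph. *)
Let c := sup lower.

Let c_ge y b : G (y, b) -> b - p (y - x0) <= c.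
Proof. by move=> Gyb; apply: sup_upper_bound has_sup_lower _ _; exists y, b. Qed.

Let c_le x a : G (x, a) -> c <= p (x + x0) - a.
Proof.
move=> Gxa; apply: ge_sup; first by case: has_sup_lower.
by move=> _ [y [b [Gyb ->]]]; exact: lower_le Gyb.
Qed.

Let extension :=
  [set xa | exists x a t, G (x, a) /\ xa = (x + t *: x0, a + t * c)].

Let extension_functional x a b : extension (x, a) -> extension (x, b) -> a = b.
Proof.
case: domG => _ GD GZ Gfun _.
move=> [y [a' [t [Gya /pair_equal_spec[-> ->]]]]]
  [z [b' [s [Gzb /pair_equal_spec[Eyz ->]]]]].
have [ets|nts] := eqVneq t s.
  subst s; have {}Eyz : y = z by apply: (addIr (t *: x0)).
  by subst z; rewrite (Gfun _ _ _ Gya Gzb).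
have Eyz' : y - z = (s - t) *: x0.
  by rewrite scalerBl -[y](addrK (t *: x0)) Eyz addrAC [z + _]addrC addrK.
have := GZ (s - t)^-1 _ _ (GD _ _ _ _ Gya (GZ (-1) _ _ Gzb)).
rewrite scaleN1r Eyz' scalerA mulVf ?scale1r; first by move/x0_notin.
by rewrite subr_eq0 eq_sym.
Qed.

Let extension_dominated x a : extension (x, a) -> a <= p x.
Proof.
case: domG => _ _ GZ _ Gp [y [b [t [Gyb /pair_equal_spec[-> ->]]]]].
have [t_lt0|t_gt0|->] := ltgtP t 0; last by rewrite scale0r mul0r !addr0; exact: Gp.
- have s_gt0 : 0 < - t by rewrite oppr_gt0.
  have := c_ge (GZ (- t)^-1 _ _ Gyb).
  have -> : (- t)^-1 *: y - x0 = (- t)^-1 *: (y + t *: x0).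
    by rewrite scalerDr scalerA invrN mulNr mulVf ?lt_eqF // scaleN1r.
  rewrite pZ ?invr_ge0 ?(ltW s_gt0) // -mulrBr.
  by rewrite -(ler_pM2l s_gt0) mulrA mulfV ?gt_eqF // mul1r; lra.
- have := c_le (GZ t^-1 _ _ Gyb).
  have -> : t^-1 *: y + x0 = t^-1 *: (y + t *: x0).
    by rewrite scalerDr scalerA mulVf ?gt_eqF // scale1r.
  rewrite pZ ?invr_ge0 ?(ltW t_gt0) // -mulrBr.
  by rewrite -(ler_pM2l t_gt0) mulrA mulfV ?gt_eqF // mul1r; lra.
Qed.

Lemma dominated_graph_extension :
  exists2 G', dominated_graph G' & G `<` G'.
Proof.
case: (domG) => G00 GD GZ _ _; exists extension; split.
- by exists 0, 0, 0; rewrite scale0r mul0r !addr0.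
- move=> _ _ _ _ [x [a [t [Gxa /pair_equal_spec[-> ->]]]]]
    [y [b [s [Gyb /pair_equal_spec[-> ->]]]]].
  exists (x + y), (a + b), (t + s); split; first exact: GD.
  by rewrite scalerDl mulrDl; congr (_, _); exact: addrACA.
- move=> r _ _ [x [a [t [Gxa /pair_equal_spec[-> ->]]]]].
  exists (r *: x), (r * a), (r * t); split; first exact: GZ.
  by rewrite scalerDr scalerA mulrDr mulrA.
- exact: extension_functional.
- exact: extension_dominated.
- by move=> [x a] Gxa; exists x, a, 0; rewrite scale0r mul0r !addr0.
- move=> extG; apply: (@x0_notin c); apply: extG.
  by exists 0, 0, 1; rewrite scale1r mul1r !add0r.
Qed.

End OneStepExtension.

Lemma dominated_graph_bigcup (F : set (set (V * R))) :
  F !=set0 -> (forall G, F G -> dominated_graph G) -> total_on F subset ->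
  dominated_graph (\bigcup_(G in F) G).
Proof.
move=> [G0 FG0] domF Ftot.
have common G1 G2 w1 w2 : F G1 -> F G2 -> G1 w1 -> G2 w2 ->
    exists2 G, F G & G w1 /\ G w2.
  move=> F1 F2 G1w G2w; have [G12|G21] := Ftot _ _ F1 F2.
    by exists G2 => //; split => //; exact: G12.
  by exists G1 => //; split => //; exact: G21.
split.
- by exists G0 => //; case: (domF _ FG0).
- move=> x a y b [G1 F1 G1xa] [G2 F2 G2yb].
  have [G FG [Gxa Gyb]] := common _ _ _ _ F1 F2 G1xa G2yb.
  by exists G => //; case: (domF _ FG) => _ + _ _ _; apply.
- move=> t x a [G FG Gxa]; exists G => //.
  by case: (domF _ FG) => _ _ + _ _; apply.
- move=> x a b [G1 F1 G1xa] [G2 F2 G2xb].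
  have [G FG [Gxa Gxb]] := common _ _ _ _ F1 F2 G1xa G2xb.
  by case: (domF _ FG) => _ _ _ Gfun _; exact: Gfun Gxa Gxb.
- by move=> x a [G FG Gxa]; case: (domF _ FG) => _ _ _ _; apply.
Qed.

Lemma hahn_banach_graph (G0 : set (V * R)) : dominated_graph G0 ->
  exists F : V -> R,
    [/\ forall x y, F (x + y) = F x + F y,
        forall t x, F (t *: x) = t * F x,
        forall x a, G0 (x, a) -> F x = a &
        forall x, F x <= p x].
Proof.
move=> domG0.
pose P := [set G | G = set0 \/ G0 `<=` G /\ dominated_graph G].
have [|A [PA Amax]] := @Zorn_bigcup _ P.
  move=> F FP Ftot.
  pose F' := F `&` [set G | G0 `<=` G /\ dominated_graph G].
  have -> : \bigcup_(G in F) G = \bigcup_(G in F') G.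
    apply/seteqP; split => [w [G FG Gw]|w [G [FG _] Gw]]; last by exists G.
    by exists G => //; split => //; case: (FP _ FG) => // G_0; rewrite G_0 in Gw.
  have [[G F'G]|noF'] := pselect (F' !=set0); last first.
    left; apply/seteqP; split => // w [G F'G _]; apply: noF'; by exists G.
  right; split; first by move=> w G0w; exists G => //; case: F'G => _ [+ _]; apply.
  apply: dominated_graph_bigcup; first by exists G.
    by move=> G' [_ []].
  by move=> G1 G2 [F1 _] [F2 _]; exact: Ftot.
have [G0A domA] : G0 `<=` A /\ dominated_graph A.
  case: PA => // A0; exfalso; apply: (Amax G0); last by right; split.
  rewrite A0; split => // /(_ (0, 0)); case: domG0 => G00 _ _ _ _.
  by move/(_ G00).
have total x : exists a, A (x, a).
  apply: contrapT => /forallNP Anx.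
  have [A' domA' AA'] := dominated_graph_extension domA Anx.
  apply: (Amax A' AA'); right; split => //.
  by apply: subset_trans G0A _; case: AA'.
have [F FA] := choice total.
case: domA => _ AD AZ Afun Ap; exists F; split.
- by move=> x y; apply: Afun (FA _) _; apply: AD.
- by move=> t x; apply: Afun (FA _) _; apply: AZ.
- by move=> x a /G0A; apply: Afun (FA _).
- by move=> x; apply: Ap.
Qed.

Lemma hahn_banach_subspace (M : set V) (x : V) (r : R) :
  (forall y, 0 <= p y) ->
  M 0 -> (forall m1 m2, M m1 -> M m2 -> M (m1 + m2)) ->
  (forall t m, M m -> M (t *: m)) ->
  0 <= r -> (forall m, M m -> r <= p (x + m)) ->
  exists F : V -> R,
    [/\ forall y z, F (y + z) = F y + F z,
        forall t y, F (t *: y) = t * F y,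
        F x = r, forall m, M m -> F m = 0 &
        forall y, F y <= p y].
Proof.
move=> p_ge0 M0 MD MZ r_ge0 r_le.
pose G0 := [set ya | exists m t, M m /\ ya = (m + t *: x, t * r)].
have domG0 : dominated_graph G0.
  split.
  - by exists 0, 0; rewrite scale0r addr0 mul0r.
  - move=> _ _ _ _ [m1 [t1 [M1 /pair_equal_spec[-> ->]]]]
                    [m2 [t2 [M2 /pair_equal_spec[-> ->]]]].
    exists (m1 + m2), (t1 + t2); split; first exact: MD.
    by rewrite scalerDl mulrDl addrACA.
  - move=> s _ _ [m [t [Mm /pair_equal_spec[-> ->]]]].
    exists (s *: m), (s * t); split; first exact: MZ.
    by rewrite scalerDr scalerA mulrA.
  - move=> y a b [m1 [t1 [M1 /pair_equal_spec[E1 ->]]]]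
                  [m2 [t2 [M2 /pair_equal_spec[E2 ->]]]].
    have [->//|nt] := eqVneq t1 t2.
    (* otherwise [x] lies in [M], which forces [r <= p 0 = 0] *)
    have E : m1 - m2 = (t2 - t1) *: x.
      by rewrite scalerBl -[m1](addrK (t1 *: x)) -E1 E2 addrAC [m2 + _]addrC addrK.
    have Mx : M (- x).
      have -> : - x = (t2 - t1)^-1 *: (m2 - m1).
        by rewrite -[m2 - m1]opprB E scalerN scalerA mulVf ?scale1r // subr_eq0 eq_sym.
      by apply/MZ/(MD _ _ M2); rewrite -scaleN1r; exact: MZ.
    have := r_le _ Mx; rewrite subrr.
    have := @pZ 0 0 (lexx 0); rewrite scale0r mul0r => -> r_le0.
    have r0 : r = 0 by apply/eqP; rewrite eq_le r_le0 r_ge0.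
    by rewrite r0 !mulr0.
  - move=> _ _ [m [t [Mm /pair_equal_spec[-> ->]]]].
    have [t_le0|t_gt0] := leP t 0; first by rewrite (le_trans _ (p_ge0 _)) ?mulr_le0_ge0.
    have -> : m + t *: x = t *: (x + t^-1 *: m).
      by rewrite scalerDr scalerA mulfV ?gt_eqF // scale1r addrC.
    by rewrite pZ ?(ltW t_gt0) // ler_pM2l //; apply/r_le/MZ.
have [F [FD FZ FG0 Fp]] := hahn_banach_graph domG0.
exists F; split => //.
- by apply: FG0; exists 0, 1; rewrite scale1r add0r mul1r.
- by move=> m Mm; apply: FG0; exists m, 0; rewrite scale0r addr0 mul0r.
Qed.

End HahnBanach.

Lemma linear_exists (K : numFieldType) (X : lmodType K) (f : X -> K) :
  linear f -> exists F : {linear X -> K}, F =1 f.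
Proof.
move=> lf.
pose F : {linear X -> K} := HB.pack f (GRing.isLinear.Build K X K *:%R f lf).
by exists F.
Qed.

Definition separates_lines (K : numFieldType) (X : normedModType K) :=
  forall (c1 c2 : X) (r : K), 0 < r -> (forall k : K, r <= `|c2 - k *: c1|) ->
  exists F : {linear X -> K}, [/\ forall x, `|F x| <= `|x|, F c1 = 0 & r <= `|F c2|].

Section LineSeparation.
Variable R : realType.

Lemma separates_lines_real (X : normedModType R) : separates_lines X.
Proof.
move=> c1 c2 r r_gt0 r_le.
have [|||||||F [FD FZ Fc2 Fc1 Fle]] :=
  @hahn_banach_subspace R X (fun x => `|x|) (@ler_normD _ _) _
    [set k *: c1 | k in setT] c2 r.
- by move=> t x t_ge0; rewrite normrZ ger0_norm.
- exact: normr_ge0.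
- by exists 0 => //; rewrite scale0r.
- by move=> _ _ [a _ <-] [b _ <-]; exists (a + b) => //; rewrite scalerDl.
- by move=> t _ [a _ <-]; exists (t * a) => //; rewrite scalerA.
- exact: ltW.
- by move=> _ [k _ <-]; have := r_le (- k); rewrite scaleNr opprK.
have [G GE] : exists G : {linear X -> R}, G =1 F.
  by apply: linear_exists => a x y; rewrite FD FZ.
exists G; split => [x||]; rewrite GE.
- rewrite ler_norml Fle andbT lerNl -mulN1r -FZ scaleN1r.
  by rewrite -(normrN x) Fle.
- by apply: Fc1; exists 1 => //; rewrite scale1r.
- by rewrite Fc2 ger0_norm // ltW.
Qed.

End LineSeparation.

Definition realified (R : rcfType) (X : lmodType R[i]) : Type := X.

Section Realified.
Local Open Scope complex_scope.
Local Notation Re := complex.Re.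
Local Notation Im := complex.Im.
Variables (R : rcfType) (X : lmodType R[i]).

HB.instance Definition _ := GRing.Zmodule.on (realified X).

Definition realified_scale (t : R) (x : realified X) : realified X := t%:C *: (x : X).

Lemma realified_scaleA a b (x : realified X) :
  realified_scale a (realified_scale b x) = realified_scale (a * b) x.
Proof. by rewrite /realified_scale scalerA -rmorphM. Qed.

Lemma realified_scale1 : left_id 1 realified_scale.
Proof. by move=> x; rewrite /realified_scale rmorph1 scale1r. Qed.

Lemma realified_scaleDr : right_distributive realified_scale +%R.
Proof. by move=> t x y; rewrite /realified_scale scalerDr. Qed.

Lemma realified_scaleDl (x : realified X) :
  {morph realified_scale^~ x : a b / a + b}.
Proof. by move=> a b; rewrite /realified_scale rmorphD scalerDl. Qed.

HB.instance Definition _ := GRing.Zmodule_isLmodule.Build R (realified X)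
  realified_scaleA realified_scale1 realified_scaleDr realified_scaleDl.

Lemma complexify_linear (F : realified X -> R) :
  (forall x y, F (x + y) = F x + F y) -> (forall t x, F (t *: x) = t * F x) ->
  exists G : {linear X -> R[i]}, forall x : X,
    G x = (F x)%:C - 'i * (F ('i *: x))%:C.
Proof.
move=> FD FZ; pose f (x : X) := (F x)%:C - 'i * (F ('i *: x))%:C.
have FK k (x : X) : F (k *: x) = Re k * F x + Im k * F ('i *: x).
  have -> : k *: x = (Re k)%:C *: x + (Im k)%:C *: ('i *: x).
    by rewrite scalerA -scalerDl mulrC -complexE.
  by rewrite FD; congr (_ + _); apply: FZ.
apply: linear_exists => k x y.
rewrite /f scalerDr scalerA !FD (FK k) (FK ('i * k)).
case: k => a b; apply/eqP; rewrite eq_complex /=.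
by apply/andP; split; apply/eqP; ring.
Qed.

End Realified.

Section ComplexLineSeparation.
Local Open Scope complex_scope.
Local Notation Re := complex.Re.
Variables (R : realType) (X : normedModType R[i]).

Let p (x : realified X) : R := Re `|x : X|.

Let pE (x : X) : `|x| = (p x)%:C.
Proof. by rewrite /p RRe_real // normr_real. Qed.

Let p_ge0 x : 0 <= p x.
Proof. by rewrite -ler0c -pE. Qed.

Let pD x y : p (x + y) <= p x + p y.
Proof. by have := ler_normD (x : X) y; rewrite !pE -rmorphD lecR. Qed.

Let pZ (t : R) x : 0 <= t -> p (t *: x) = t * p x.
Proof.
move=> t_ge0; have := normrZ t%:C (x : X).
by rewrite !pE ger0_norm ?ler0c // -rmorphM => /complexI.
Qed.

Lemma separates_lines_complex : separates_lines X.
Proof.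
move=> c1 c2 r r_gt0 r_le.
have rE : r = (Re r)%:C by rewrite RRe_real // gtr0_real.
have [||||||F [FD FZ Fc2 Fc1 Fle]] := @hahn_banach_subspace R (realified X) p
  pD pZ [set k *: c1 | k in setT] c2 (Re r).
- exact: p_ge0.
- by exists 0 => //; rewrite scale0r.
- by move=> _ _ [a _ <-] [b _ <-]; exists (a + b) => //; rewrite scalerDl.
- by move=> t _ [a _ <-]; exists (t%:C * a) => //; rewrite [RHS]scalerA.
- by rewrite -ler0c -rE ltW.
- move=> _ [k _ <-]; have := r_le (- k).
  by rewrite scaleNr opprK [X in X <= _ -> _]rE pE lecR.
have [G GE] := complexify_linear FD FZ.
have ReG x : Re (G x) = F x by rewrite GE /=; ring.
exists G; split.
- move=> x; set z := G x.
  have zE : `|z| = (Re `|z|)%:C by rewrite RRe_real // normr_real.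
  have z2 : Re `|z| ^+ 2 = F (z^* *: x).
    rewrite -ReG; have -> : G (z^* *: x) = z^* * z by rewrite linearZ.
    by rewrite mulrC -sqr_normc zE -rmorphXn.
  have z2_le : Re `|z| ^+ 2 <= Re `|z| * p x.
    by have := Fle (z^* *: x); rewrite -z2 /p normrZ normcJ zE pE -rmorphM.
  rewrite zE pE lecR; have := p_ge0 x.
  have : 0 <= Re `|z| by rewrite -ler0c -zE.
  nra.
- rewrite GE (Fc1 c1) ?(Fc1 ('i *: c1)); last 2 first.
  + by exists 'i.
  + by exists 1; rewrite ?scale1r.
  by rewrite rmorph0 mulr0 subr0.
- by rewrite rE -Fc2 -ReG; apply: le_trans (normc_ge_Re _); rewrite lecR ler_norm.
Qed.

End ComplexLineSeparation.

Section SimpleFunctions.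
Context d (S : measurableType d).

Lemma simple_fun_preimage T (phi : S -> T) (B : set T) :
  simple_fun phi -> measurable (phi @^-1` B).
Proof.
move=> [fin_phi mphi].
have -> : phi @^-1` B = \bigcup_(x in range phi `&` B) phi @^-1` [set x].
  apply/seteqP; split => [s Bs|s [x [_ Bx] phi_s]]; last by rewrite /preimage /= phi_s.
  by exists (phi s) => //; split => //; exists s.
by apply: fin_bigcup_measurable => //; exact: sub_finite_set fin_phi.
Qed.

Lemma simple_fun_comp2 T1 T2 T (op : T1 -> T2 -> T) (phi : S -> T1) (psi : S -> T2) :
  simple_fun phi -> simple_fun psi -> simple_fun (fun s => op (phi s) (psi s)).
Proof.
move=> sphi spsi; split => [|x].
  apply: sub_finite_set (finite_image2 op sphi.1 spsi.1).
  by move=> _ [s _ <-]; exists (phi s); [exists s|exists (psi s); [exists s|]].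
have -> : (fun s => op (phi s) (psi s)) @^-1` [set x] =
    \bigcup_(a in range phi) (phi @^-1` [set a] `&` psi @^-1` [set b | op a b = x]).
  apply/seteqP; split => [s opx|s [_ [t _ <-] [/= -> //]]].
  by exists (phi s); [exists s|].
apply: fin_bigcup_measurable => [|a _]; first exact: sphi.1.
by apply: measurableI; apply: simple_fun_preimage.
Qed.

Lemma simple_fun_values_enum (T : eqType) (I : countType) (phi : I -> S -> T)
    (t0 : T) : (forall i, simple_fun (phi i)) ->
  exists cs : nat -> T, cs 0%N = t0 /\ forall i s, range cs (phi i s).
Proof.
move=> sphi; have /choice[L LE] : forall i, exists l : seq T, range (phi i) = [set` l].
  by move=> i; apply/finite_seqP; exact: (sphi i).1.
exists (fun j => if j is j'.+1 then
  if unpickle j' is Some (i, k) then nth t0 (L i) k else t0 else t0); split=> // i s.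
have phi_in : [set` L i] (phi i s) by rewrite -LE; exists s.
by exists (pickle (i, index (phi i s) (L i))).+1; rewrite //= pickleK nth_index.
Qed.

Lemma measurable_preimage_pieces T (a : S -> T) (E : nat -> set S)
    (q : nat -> S -> T) (c : T) (U : set T) :
  (forall j, measurable (E j)) -> (forall j, measurable (E j `&` q j @^-1` U)) ->
  (forall j s, E j s -> a s = q j s) -> (forall s, ~ (\bigcup_j E j) s -> a s = c) ->
  measurable (a @^-1` U).
Proof.
move=> mE mEq aq ac.
have -> : a @^-1` U =
    \bigcup_j (E j `&` q j @^-1` U) `|` (~` (\bigcup_j E j) `&` [set _ | U c]).
  apply/seteqP; split => s.
  - move=> Uas; have [[j _ Ejs]|nE] := pselect ((\bigcup_j E j) s).
      by left; exists j => //; split => //; rewrite /preimage /= -(aq j s Ejs).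
    by right; split => //; rewrite /= -(ac s nE).
  - case=> [[j _ [Ejs Uq]]|[nE Uc]]; rewrite /preimage /=.
      by rewrite (aq j s Ejs).
    by rewrite (ac s nE).
apply: measurableU; first exact: bigcupT_measurable.
apply: measurableI; first by apply: measurableC; exact: bigcupT_measurable.
have [Uc|nUc] := pselect (U c).
  by rewrite (_ : [set _ | U c] = setT) //; apply/seteqP; split.
by rewrite (_ : [set _ | U c] = set0) //; apply/seteqP; split.
Qed.

End SimpleFunctions.

(* [K] is [R] or [R[i]]: [emb] embeds [R] into [K] and [re] reads a nonnegative
   element of [K] as a real number, so that norms become real ([rnorm]) and
   inequalities between them can be handled by [lra]. *)
Section PointwiseFactorization.
Variables (R : realType) (K : numFieldType) (emb : {rmorphism R -> K}) (re : K -> R).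
Hypothesis ler_emb : forall a b, (emb a <= emb b) = (a <= b).
Hypothesis reK : forall x : K, 0 <= x -> emb (re x) = x.

Lemma ltr_emb a b : (emb a < emb b) = (a < b).
Proof. by rewrite !lt_def ler_emb (inj_eq (fmorph_inj _)). Qed.

Definition rnorm (V : normedModType K) (x : V) : R := re `|x|.

Implicit Types V : normedModType K.

Lemma rnormE V (x : V) : `|x| = emb (rnorm x). Proof. by rewrite reK. Qed.

Lemma rnorm_ge0 V (x : V) : 0 <= rnorm x.
Proof. by rewrite -ler_emb rmorph0 -rnormE. Qed.

Lemma rnorm_gt0 V (x : V) : x != 0 -> 0 < rnorm x.
Proof. by move=> x0; rewrite -ltr_emb rmorph0 -rnormE normr_gt0. Qed.

Lemma rnormD V (x y : V) : rnorm (x + y) <= rnorm x + rnorm y.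
Proof. by rewrite -ler_emb rmorphD -!rnormE ler_normD. Qed.

Lemma rnormZ V (k : K) (x : V) : rnorm (k *: x) = rnorm k * rnorm x.
Proof. by apply: (fmorph_inj emb); rewrite rmorphM -!rnormE normrZ. Qed.

Lemma rnormN V (x : V) : rnorm (- x) = rnorm x.
Proof. by rewrite /rnorm normrN. Qed.

Lemma rnorm_distC V (x y : V) : rnorm (x - y) = rnorm (y - x).
Proof. by rewrite /rnorm distrC. Qed.

Lemma rnormM (a b : K) : rnorm (a * b) = rnorm a * rnorm b.
Proof. exact: rnormZ. Qed.

Lemma ler_rnorm V (W : normedModType K) (x : V) (y : W) :
  (`|x| <= `|y|) = (rnorm x <= rnorm y).
Proof. by rewrite !rnormE ler_emb. Qed.

Variable X : normedModType K.
Hypothesis sepX : separates_lines X.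

Definition far_from_line (c1 c2 : X) (r : R) :=
  forall k : K, r <= rnorm (c2 - k *: c1).

Lemma sep_functional_subproof (c1 c2 : X) (r : R) :
  exists F : {linear X -> K}, (forall x, `|F x| <= `|x|) /\
    (0 < r -> far_from_line c1 c2 r -> F c1 = 0 /\ r <= rnorm (F c2)).
Proof.
have [r_gt0_far|] := pselect (0 < r /\ far_from_line c1 c2 r).
  case: r_gt0_far => r_gt0 far.
  have [||F [F_le Fc1 Fc2]] := @sepX c1 c2 (emb r).
  - by rewrite -(rmorph0 emb) ltr_emb.
  - by move=> k; rewrite rnormE ler_emb.
  by exists F; split => // _ _; rewrite -ler_emb -rnormE.
move=> not_far; have [F F0] : exists F : {linear X -> K}, F =1 fun=> 0.
  by apply: linear_exists => a x y; rewrite scaler0 addr0.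
exists F; split=> [x|r_gt0 far]; last by exfalso; apply: not_far.
by rewrite F0 normr0 normr_ge0.
Qed.

Definition sep_functional c1 c2 r : {linear X -> K} :=
  projT1 (cid (sep_functional_subproof c1 c2 r)).

Lemma sep_functional_le c1 c2 r x : `|sep_functional c1 c2 r x| <= `|x|.
Proof. by case: (projT2 (cid (sep_functional_subproof c1 c2 r))) => + _; apply. Qed.

Lemma sep_functionalP c1 c2 r : 0 < r -> far_from_line c1 c2 r ->
  sep_functional c1 c2 r c1 = 0 /\ r <= rnorm (sep_functional c1 c2 r c2).
Proof. by case: (projT2 (cid (sep_functional_subproof c1 c2 r))). Qed.

Definition approximable (D : set X) (z : X) :=
  forall e, 0 < e -> exists2 c, D c & rnorm (z - c) < e.

Lemma sep_functional_neq0 (D : set X) z : D 0 -> approximable D z -> z != 0 ->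
  exists c n, D c /\ sep_functional 0 c n.+1%:R^-1 z != 0.
Proof.
move=> D0 Dz z_neq0.
have [n] := ltr_add_invr (divr_gt0 (rnorm_gt0 z_neq0) (ltr0n _ 2)).
rewrite add0r; set r := n.+1%:R^-1 => r_lt.
have r_gt0 : 0 < r by rewrite invr_gt0.
have [c Dc zc] := Dz _ (divr_gt0 r_gt0 (ltr0n _ 2)).
exists c, n; split => //; apply/eqP => Fz0.
have far : far_from_line 0 c r.
  by move=> k; rewrite scaler0 subr0; have := rnormD (z - c) c; rewrite subrK; lra.
have [_ Fc] := sep_functionalP r_gt0 far.
have := sep_functional_le 0 c r (c - z).
by rewrite linearB /= Fz0 subr0 ler_rnorm rnorm_distC; lra.
Qed.

Lemma rnorm_sub_line_lb (y : {linear X -> K}) (u v : X) (a k : K) :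
  (forall x, `|y x| <= `|x|) -> y v = a * y u ->
  rnorm (v - a *: u) * rnorm (y u) <= rnorm (v - k *: u) * (rnorm (y u) + rnorm u).
Proof.
move=> y_le yv.
have d_le : rnorm (a - k) * rnorm (y u) <= rnorm (v - k *: u).
  rewrite -rnormM -ler_rnorm.
  have -> : (a - k) * y u = y (v - k *: u) by rewrite linearB linearZ /= yv mulrBl.
  exact: y_le.
have w_le : rnorm (v - a *: u) <= rnorm (v - k *: u) + rnorm (a - k) * rnorm u.
  have -> : v - a *: u = (v - k *: u) - (a - k) *: u.
    by rewrite scalerBl opprB addrA subrK.
  by apply: le_trans (rnormD _ _) _; rewrite rnormN rnormZ.
have := ler_wpM2r (rnorm_ge0 (y u)) w_le.
have := ler_wpM2r (rnorm_ge0 u) d_le.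
lra.
Qed.

Lemma far_from_line_perturb (u v : X) (b : R) :
  u != 0 -> 0 < b -> far_from_line u v b ->
  exists2 e, 0 < e & forall c1 c2, rnorm (u - c1) < e -> rnorm (v - c2) < e ->
    far_from_line c1 c2 (b / 2).
Proof.
move=> u_neq0 b_gt0 far.
have nu_gt0 := rnorm_gt0 u_neq0; have nv_ge0 := rnorm_ge0 v.
(* beyond [L], the term [k *: c1] alone keeps [c2 - k *: c1] away from [0] *)
pose L := 2 * (rnorm v + 1 + b) / rnorm u.
have LE : L * rnorm u = 2 * (rnorm v + 1 + b) by rewrite mulfVK ?gt_eqF.
have L_ge0 : 0 <= L by rewrite divr_ge0 ?(ltW nu_gt0) //; lra.
pose e := Num.min (rnorm u / 2) (Num.min 1 (b / (2 * (1 + L)))).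
have e_gt0 : 0 < e by rewrite !lt_min ltr01 !divr_gt0 //; lra.
exists e => // c1 c2; rewrite !lt_min => /and3P[uc1 _ uc1'] /and3P[_ vc2 vc2'] k.
have eL (x : R) : x < b / (2 * (1 + L)) -> x * (1 + L) < b / 2.
  by rewrite ltr_pdivlMr; [rewrite ltr_pdivlMr //; lra | lra].
have := far k; have := rnorm_ge0 k; have := rnorm_ge0 (u - c1).
have [k_le|k_gt] := leP (rnorm k) L.
- have tri : rnorm (v - k *: u) <=
      rnorm (c2 - k *: c1) + rnorm (v - c2) + rnorm k * rnorm (u - c1).
    have -> : v - k *: u = (c2 - k *: c1) + (v - c2) + k *: (c1 - u).
      by rewrite [_ + (v - c2)]addrC addrA subrK scalerBr addrA subrK.
    apply: le_trans (rnormD _ _) _; rewrite rnormZ (rnorm_distC c1) lerD2r.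
    exact: rnormD.
  have := eL _ uc1'; have := eL _ vc2'; nra.
- have c1_ge : rnorm u / 2 <= rnorm c1.
    by have := rnormD (u - c1) c1; rewrite subrK; lra.
  have c2_le : rnorm c2 <= rnorm v + 1.
    by have := rnormD (c2 - v) v; rewrite subrK rnorm_distC; lra.
  have kc1_le : rnorm k * rnorm c1 <= rnorm (c2 - k *: c1) + rnorm c2.
    by have := rnormD (- (c2 - k *: c1)) c2; rewrite rnormN opprB subrK rnormZ.
  have := ler_wpM2l (rnorm_ge0 k) c1_ge.
  have : L * (rnorm u / 2) < rnorm k * (rnorm u / 2) by rewrite ltr_pM2r // divr_gt0.
  have : L * (rnorm u / 2) = rnorm v + 1 + b by rewrite mulrA LE; lra.
  lra.
Qed.

Lemma sep_dominated_collinear (D : set X) (u v : X) :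
  approximable D u -> approximable D v ->
  (forall c1 c2 n, D c1 -> D c2 ->
     `|sep_functional c1 c2 n.+1%:R^-1 v| <= `|sep_functional c1 c2 n.+1%:R^-1 u|) ->
  forall y : {linear X -> K}, (forall x, `|y x| <= `|x|) -> y u != 0 ->
  v = (y v / y u) *: u.
Proof.
move=> Du Dv dom y y_le yu_neq0; set a := y v / y u.
apply/eqP; rewrite -subr_eq0; apply/negPn/negP => w_neq0.
have u_neq0 : u != 0 by apply: contraNneq yu_neq0 => ->; rewrite linear0.
pose b := rnorm (v - a *: u) * rnorm (y u) / (rnorm (y u) + rnorm u).
have yu_gt0 := rnorm_gt0 yu_neq0; have u_gt0 := rnorm_gt0 u_neq0.
have b_gt0 : 0 < b by rewrite divr_gt0 ?mulr_gt0 ?addr_gt0 ?rnorm_gt0.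
have far : far_from_line u v b.
  move=> k; rewrite ler_pdivrMr ?addr_gt0 //.
  by apply: rnorm_sub_line_lb; rewrite // /a mulfVK.
have [e e_gt0 near_far] := far_from_line_perturb u_neq0 b_gt0 far.
have [n] := ltr_add_invr (divr_gt0 b_gt0 (ltr0n _ 2)).
rewrite add0r; set r := n.+1%:R^-1 => r_lt.
have r_gt0 : 0 < r by rewrite invr_gt0.
have e'_gt0 : 0 < Num.min e (r / 2) by rewrite lt_min e_gt0 divr_gt0.
have [c1 Dc1] := Du _ e'_gt0; have [c2 Dc2] := Dv _ e'_gt0.
rewrite !lt_min => /andP[vc2 vc2'] /andP[uc1 uc1'].
have far12 : far_from_line c1 c2 r.
  by move=> k; apply: le_trans (near_far _ _ uc1 vc2 k); exact: ltW.
have [Fc1 Fc2] := sep_functionalP r_gt0 far12.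
set F := sep_functional c1 c2 r in Fc1 Fc2.
have Fu : rnorm (F u) <= rnorm (u - c1).
  by rewrite -ler_rnorm -[F u]subr0 -Fc1 -linearB; exact: sep_functional_le.
have Fv : rnorm (F c2) <= rnorm (F v) + rnorm (v - c2).
  rewrite -[F c2](subrK (F v)) -linearB addrC.
  apply: le_trans (rnormD _ _) _.
  by rewrite lerD2l rnorm_distC -ler_rnorm sep_functional_le.
have := dom _ _ n Dc1 Dc2; rewrite ler_rnorm.
lra.
Qed.

Lemma cvg_rnorm_lt V (u : nat -> V) (z : V) e : u @ \oo --> z -> 0 < e ->
  exists N, forall n, (N <= n)%N -> rnorm (z - u n) < e.
Proof.
move=> u_z e_gt0; have emb_gt0 : 0 < emb e by rewrite -(rmorph0 emb) ltr_emb.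
have [N _ uN] := cvgr_dist_lt _ _ u_z _ emb_gt0.
by exists N => n Nn; rewrite -ltr_emb -rnormE; exact: uN.
Qed.

Lemma approximable_cvg (D : set X) (u : nat -> X) z :
  (forall n, D (u n)) -> u @ \oo --> z -> approximable D z.
Proof.
move=> Du u_z e e_gt0; have [N uN] := cvg_rnorm_lt u_z e_gt0.
by exists (u N) => //; exact: uN.
Qed.

Lemma le_norm_continuous (F : {linear X -> K}) :
  (forall x, `|F x| <= `|x|) -> continuous F.
Proof.
move=> F_le x; apply/cvgrPdist_lt => e e_gt0; apply/nbhs_normP.
by exists e => // z /= xz; rewrite -linearB; apply: le_lt_trans (F_le _) xz.
Qed.

Lemma open_neq0 : open [set x : K | x != 0].
Proof.
rewrite openE => x /= x_neq0; apply/nbhs_normP.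
exists `|x|; first by rewrite /= normr_gt0.
by move=> z /=; apply: contraTneq => ->; rewrite subr0 ltxx.
Qed.

Section Measurability.
Context d (S : measurableType d).

Lemma measurable_limit_preimage (phi : nat -> S -> K) (h : S -> K) (D : set S)
    (U : set K) : measurable D -> (forall n, simple_fun (phi n)) ->
  (forall s, D s -> phi ^~ s @ \oo --> h s) -> open U ->
  measurable (D `&` h @^-1` U).
Proof.
move=> mD sphi phi_h oU.
pose W m := [set y : K | forall z, rnorm (y - z) < m.+1%:R^-1 -> U z].
have r_gt0 m : 0 < m.+1%:R^-1 :> R by rewrite invr_gt0.
have -> : D `&` h @^-1` U =
    D `&` \bigcup_m \bigcup_N \bigcap_n (phi (n + N)%N @^-1` W m).
  apply/seteqP; split => s [Ds hsU]; split => //.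
  - move: oU; rewrite openE => /(_ _ hsU) /nbhs_normP[e /= e_gt0 ball_U].
    have re_gt0 : 0 < re e by rewrite -ltr_emb rmorph0 reK // ltW.
    have [m] := ltr_add_invr (divr_gt0 re_gt0 (ltr0n _ 2)); rewrite add0r => m_lt.
    have [N hN] := cvg_rnorm_lt (phi_h _ Ds) (r_gt0 m).
    exists m => //; exists N => // n _ z phi_z; apply: ball_U => /=.
    rewrite -(reK (ltW e_gt0)) rnormE ltr_emb.
    have := rnormD (h s - phi (n + N)%N s) (phi (n + N)%N s - z).
    rewrite addrA subrK; have := hN _ (leq_addl n N).
    (* [set] identifies the two elaborations of [m.+1%:R^-1] for [lra] *)
    by move: m_lt phi_z; set r := m.+1%:R^-1; lra.
  - case: hsU => m _ [N _ WN].
    have [N1 hN1] := cvg_rnorm_lt (phi_h _ Ds) (r_gt0 m).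
    by apply: (WN N1 I); rewrite rnorm_distC; apply: hN1; exact: leq_addr.
apply: measurableI => //; do 2!apply: bigcupT_measurable => ?.
by apply: bigcapT_measurable => n; exact: simple_fun_preimage.
Qed.

End Measurability.

Section CountableFamily.
Variable cs : nat -> X.
Hypothesis cs0 : cs 0%N = 0.

Definition sep_family (j : nat) : {linear X -> K} :=
  let: (j1, j2, n) := odflt (0, 0, 0)%N (unpickle j) in
  sep_functional (cs j1) (cs j2) n.+1%:R^-1.

Lemma sep_family_le j x : `|sep_family j x| <= `|x|.
Proof.
by rewrite /sep_family; case: (odflt _ _) => [[j1 j2] n]; exact: sep_functional_le.
Qed.

Lemma sep_familyP j1 j2 n :
  exists j, sep_family j = sep_functional (cs j1) (cs j2) n.+1%:R^-1.
Proof. by exists (pickle (j1, j2, n)); rewrite /sep_family pickleK. Qed.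

Definition family_ratio (u v : X) : K :=
  let j := xget 0%N [set j | sep_family j u != 0] in sep_family j v / sep_family j u.

Section Dominated.
Variables u v : X.
Hypotheses (Du : approximable (range cs) u) (Dv : approximable (range cs) v).
Hypothesis dom : forall j, `|sep_family j v| <= `|sep_family j u|.

Lemma family_collinear j : sep_family j u != 0 ->
  v = (sep_family j v / sep_family j u) *: u.
Proof.
apply: sep_dominated_collinear Du Dv _ _ (sep_family_le j).
by move=> _ _ n [j1 _ <-] [j2 _ <-]; have [j' <-] := sep_familyP j1 j2 n.
Qed.

Lemma family_null : (forall j, sep_family j u = 0) -> u = 0 /\ v = 0.
Proof.
have null z : approximable (range cs) z -> (forall j, sep_family j z = 0) -> z = 0.
  move=> Dz z0; apply: contrapT => /eqP z_neq0.
  have D0 : range cs 0 by exists 0%N.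
  have [_ [n [[j2 _ <-] /eqP]]] := sep_functional_neq0 D0 Dz z_neq0.
  by rewrite -cs0; have [j <-] := sep_familyP 0 j2 n; apply.
move=> u0; split; first exact: null.
by apply: null => // j; apply/eqP; have := dom j; rewrite u0 normr0 normr_le0.
Qed.

Lemma family_ratio_eq j : sep_family j u != 0 ->
  family_ratio u v = sep_family j v / sep_family j u.
Proof.
move=> Gu_neq0; rewrite /family_ratio; set j' := xget _ _.
have Gu'_neq0 : sep_family j' u != 0.
  exact: (xgetPex 0%N (ex_intro [set j | sep_family j u != 0] j Gu_neq0)).
have u_neq0 : u != 0 by apply: contraNneq Gu_neq0 => ->; rewrite linear0.
apply/eqP; rewrite -subr_eq0.
have /eqP : (sep_family j' v / sep_family j' u - sep_family j v / sep_family j u)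
    *: u = 0.
  by rewrite scalerBl -!family_collinear // subrr.
by rewrite scaler_eq0 (negPf u_neq0) orbF.
Qed.

Lemma family_ratioP : v = family_ratio u v *: u /\ `|family_ratio u v| <= 1.
Proof.
have [[j /= Gu_neq0]|] := pselect (exists j, sep_family j u != 0).
  rewrite (family_ratio_eq Gu_neq0) -family_collinear //; split => //.
  by rewrite normrM normrV ?unitfE // ler_pdivrMr ?normr_gt0 // mul1r.
move=> /forallNP u_null; have [->->] : u = 0 /\ v = 0.
  by apply: family_null => j; apply/eqP/negPn/negP; exact: u_null.
by rewrite scaler0 /family_ratio !linear0 mul0r normr0 ler01.
Qed.

End Dominated.

End CountableFamily.

Section Factorization.
Context d (S : measurableType d).
Variables (phi psi : nat -> S -> X) (f g : S -> X).
Hypotheses (sphi : forall n, simple_fun (phi n)) (spsi : forall n, simple_fun (psi n)).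
Hypothesis phi_f : forall s, phi ^~ s @ \oo --> f s.
Hypothesis psi_g : forall s, psi ^~ s @ \oo --> g s.

Lemma measurable_nonzero (F : {linear X -> K}) :
  continuous F -> measurable [set s | F (f s) != 0].
Proof.
move=> cF; rewrite -[X in measurable X]setTI.
apply: (measurable_limit_preimage (phi := fun n s => F (phi n s)) (h := fun s => F (f s))
  (D := setT) (U := [set x | x != 0])) => //.
- by move=> n; exact: (simple_fun_comp2 (fun x _ => F x) (sphi n) (sphi n)).
- by move=> s _; apply: (continuous_cvg _ (cF (f s))); exact: phi_f.
- exact: open_neq0.
Qed.

Lemma measurable_ratio_preimage (F : {linear X -> K}) (U : set K) :
  continuous F -> open U ->
  measurable ([set s | F (f s) != 0] `&` (fun s => F (g s) / F (f s)) @^-1` U).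
Proof.
move=> cF oU; apply: (measurable_limit_preimage
  (phi := fun n s => F (psi n s) / F (phi n s)) (h := fun s => F (g s) / F (f s))
  (D := [set s | F (f s) != 0])) => //.
- exact: measurable_nonzero.
- by move=> n; exact: (simple_fun_comp2 (fun x y => F x / F y) (spsi n) (sphi n)).
- move=> s Ffs_neq0; apply: cvgM.
    by apply: (continuous_cvg _ (cF (g s))); exact: psi_g.
  by apply: cvgV Ffs_neq0 _; apply: (continuous_cvg _ (cF (f s))); exact: phi_f.
Qed.

End Factorization.

Theorem dominated_factorization d (S : measurableType d)
    (mu : {measure set S -> \bar R}) (f g : S -> X) :
  strongly_measurable f -> strongly_measurable g ->
  (forall F : {linear X -> K}, continuous F ->
     {ae mu, forall s, `|F (g s)| <= `|F (f s)|}) ->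
  exists a : S -> K, [/\ borel_measurable a,
    {ae mu, forall s, `|a s| <= 1} & {ae mu, forall s, g s = a s *: f s}].
Proof.
move=> [phi [sphi phi_f]] [psi [spsi psi_g]] dom.
pose chi (bn : bool * nat) := if bn.1 then phi bn.2 else psi bn.2.
have schi bn : simple_fun (chi bn) by case: bn => [[]] n; [exact: sphi | exact: spsi].
have [cs [cs0 cs_chi]] := simple_fun_values_enum 0 schi.
have Df s : approximable (range cs) (f s).
  by apply: approximable_cvg (phi_f s) => n; exact: cs_chi (true, n) s.
have Dg s : approximable (range cs) (g s).
  by apply: approximable_cvg (psi_g s) => n; exact: cs_chi (false, n) s.
pose G := sep_family cs; have cG j : continuous (G j).
  exact/le_norm_continuous/sep_family_le.
have [N0 [mN0 N00 domN0]] := ae_foralln (fun j => dom (G j) (cG j)).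
pose a s := if `[< N0 s >] then 0 else family_ratio cs (f s) (g s).
have aP s : ~ N0 s -> g s = a s *: f s /\ `|a s| <= 1.
  move=> nN0s; rewrite /a asboolF //; apply: family_ratioP => // j.
  by apply: contrapT => Gfg; apply: nN0s; apply: domN0 => /(_ j).
exists a; split; last 2 first.
- by exists N0; split => // s /= nas; apply: contrapT => /aP[_]; exact: nas.
- by exists N0; split => // s /= nas; apply: contrapT => /aP[+ _]; exact: nas.
move=> U oU; apply: (measurable_preimage_pieces
  (E := fun j => ~` N0 `&` [set s | G j (f s) != 0])
  (q := fun j s => G j (g s) / G j (f s)) (c := 0)).
- by move=> j; apply: measurableI; [exact: measurableC | exact: measurable_nonzero].
- move=> j; rewrite -setIA; apply: measurableI; first exact: measurableC.
  exact: (measurable_ratio_preimage sphi spsi phi_f psi_g (cG j) oU).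
- move=> j s [nN0s Gfs_neq0]; rewrite /a asboolF // (family_ratio_eq _ _ _ Gfs_neq0) //.
  by move=> j'; apply: contrapT => Gfg; apply: nN0s; apply: domN0 => /(_ j').
- move=> s nE; rewrite /a; case: asboolP => // nN0s.
  rewrite /family_ratio; set j := xget _ _.
  have -> : G j (f s) = 0 by apply/eqP/negPn/negP => Gfs_neq0; apply: nE; exists j.
  by rewrite invr0 mulr0.
Qed.

End PointwiseFactorization.

Theorem mainTheorem3 (R : realType) (c : scalar_field)
  (X : completeNormedModType (Kof R c))
  (d : measure_display) (S : measurableType d) (mu : {measure set S -> \bar R})
  (f g : S -> X) :
  strongly_measurable f -> strongly_measurable g ->
  (forall xs : {linear X -> Kof R c}, continuous xs ->
     {ae mu, forall s, `|xs (g s)| <= `|xs (f s)|}) ->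
  exists a : S -> Kof R c,
    borel_measurable a /\
    {ae mu, forall s, `|a s| <= 1} /\
    {ae mu, forall s, g s = a s *: f s}.
Proof.
case: c X f g => X f g sf sg dom.
- have [a [ma a_le1 gaf]] := @dominated_factorization R R idfun id
    (fun _ _ => erefl) (fun _ _ => erefl) X (@separates_lines_real _ X)
    d S mu f g sf sg dom.
  by exists a.
- have [a [ma a_le1 gaf]] := @dominated_factorization R R[i]
    (real_complex R) (@complex.Re R) (@lecR R)
    (fun _ x_ge0 => RRe_real (ger0_real x_ge0)) X (@separates_lines_complex _ X)
    d S mu f g sf sg dom.
  by exists a.
Qed.
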